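(* In the setting of the MTL-IUS iteration below, under $L$-smoothness, $\mu$-strong convexity, bounded gradient variance and bounded second moments, and with $\eta_t\le\frac1L$, $\eta_t$ non-increasing and $\eta_t\le 2\eta_{t+1}$, the quantity $\Delta_t=\mathbb{E}\|w_t-w^*\|^2$ satisfies $$\Delta_{t+1}\le(1-\mu\eta_t)\Delta_t+\eta_t^2B,\qquad B=\frac1{N^2}\sum_{k=1}^N\sigma_k^2+2L\Gamma+G^2 .$$
   Context: $F^{(1)},\dots,F^{(N)}:\mathbb{R}^d\to\mathbb{R}$, $F=\frac1N\sum_kF^{(k)}$, minimizer $w^*$, $F^*=F(w^* )$, ${F^{(k)}}^*=\min F^{(k)}$, $\Gamma=F^*-\frac1N\sum_k{F^{(k)}}^*$. Each $F^{(k)}$ is $L$-smooth ($F^{(k)}(v)\le F^{(k)}(w)+(v-w)^T\nabla F^{(k)}(w)+\frac L2\|v-w\|^2$) and $\mu$-strongly convex ($F^{(k)}(v)\ge F^{(k)}(w)+(v-w)^T\nabla F^{(k)}(w)+\frac\mu2\|v-w\|^2$). Stochastic gradients $\nabla F^{(k)}(w_t,\xi_t^k)$ with independently drawn samples are unbiased, $\mathbb{E}\|\nabla F^{(k)}(w_t,\xi_t^k)-\nabla F^{(k)}(w_t)\|^2\le\sigma_k^2$, and $\mathbb{E}\|\nabla F^{(k)}(w_t,\xi_t^k)\|^2\le G^2$. Iteration: $v_{t+1}^k=w_t-\eta_t\nabla F^{(k)}(w_t,\xi_t^k)$, $w_{t+1}=v_{t+1}^{s_t}$ with $s_t$ uniform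 on $\{1,\dots,N\}$ and independent of all else. *)

From HB Require Import structures.
From mathcomp Require Import all_boot all_order all_algebra.
From mathcomp Require Import all_classical all_reals all_analysis.
Set Implicit Arguments. Unset Strict Implicit. Unset Printing Implicit Defensive.
Import Order.TTheory GRing.Theory Num.Theory.
Import numFieldNormedType.Exports.
Local Open Scope classical_set_scope.
Local Open Scope ring_scope.

Definition dotv (R : realType) (d : nat) (u v : 'rV[R]_d) : R :=
  \sum_(i < d) u ord0 i * v ord0 i.
Definition sqnorm (R : realType) (d : nat) (v : 'rV[R]_d) : R := dotv v v.

(** Borel sigma-algebra on R^d: generated by the coordinate cylinders
    {v | v_i \in A}, A Borel in R. *)
Definition coord_cyl (R : realType) (d : nat) : set (set 'rV[R]_d) :=
  fun S => exists (i : 'I_d) (A : classical_sets.set R), measurable A /\ S = [set v | A (v ord0 i)].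
Definition vecM (R : realType) (d : nat) := g_sigma_algebraType (@coord_cyl R d).

Definition meas_vec (dO : measure_display) (Om : measurableType dO) (R : realType)
  (d : nat) (X : Om -> 'rV[R]_d) : Prop :=
  measurable_fun [set: Om] (X : Om -> vecM R d).

Definition meas_oracle (R : realType) (d : nat) (dX : measure_display)
  (Xi : measurableType dX) (g : 'rV[R]_d -> Xi -> 'rV[R]_d) : Prop :=
  forall i : 'I_d, measurable_fun [set: (vecM R d * Xi)%type]
    (fun p : (vecM R d * Xi)%type => g p.1 p.2 ord0 i).

Local Open Scope ereal_scope.

Definition indep_iterate_samples (dO : measure_display) (Om : measurableType dO)
  (R : realType) (P : probability Om R) (d : nat) (X : Om -> 'rV[R]_d)
  (dX : measure_display) (Xi : measurableType dX) (N : nat) (Y : 'I_N -> Om -> Xi) : Prop :=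
  forall (A : set (vecM R d)) (B : 'I_N -> set Xi),
    measurable A -> (forall k, measurable (B k)) ->
    P ((X : Om -> vecM R d) @^-1` A `&` \bigcap_(k in [set: 'I_N]) (Y k @^-1` B k))
    = P ((X : Om -> vecM R d) @^-1` A) * \prod_(k < N) P (Y k @^-1` B k).

Definition uniform_indep_index (dO : measure_display) (Om : measurableType dO)
  (R : realType) (P : probability Om R) (d : nat) (X : Om -> 'rV[R]_d)
  (dX : measure_display) (Xi : measurableType dX) (N : nat) (Y : 'I_N -> Om -> Xi)
  (s : Om -> 'I_N) : Prop :=
  (forall k : 'I_N, measurable [set om | s om = k]) /\
  forall (A : set (vecM R d)) (B : 'I_N -> set Xi) (k : 'I_N),
    measurable A -> (forall j, measurable (B j)) ->
    P ((X : Om -> vecM R d) @^-1` A `&` \bigcap_(j in [set: 'I_N]) (Y j @^-1` B j)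
        `&` [set om | s om = k])
    = P ((X : Om -> vecM R d) @^-1` A `&` \bigcap_(j in [set: 'I_N]) (Y j @^-1` B j))
      * ((N%:R)^-1)%:E.

From HB Require Import structures.
From mathcomp Require Import all_boot all_order all_algebra.
From mathcomp Require Import all_classical all_reals all_analysis.
From mathcomp Require Import measurable_realfun.
From mathcomp Require Import ring lra.
Set Implicit Arguments.
Unset Strict Implicit.
Unset Printing Implicit Defensive.
Import Order.TTheory GRing.Theory Num.Theory.
Import numFieldNormedType.Exports.
Local Open Scope classical_set_scope.
Local Open Scope ring_scope.

(* Expanding |w_t - eta g_s(w_t, xi^s) - w*|^2 and averaging over the uniform index s, which is
   independent of (w_t, xi), replaces the selected stochastic gradient by the average over the N
   tasks. By independence of w_t and xi^k, Fubini's theorem and unbiasedness turn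
   E<w_t - w*, g_k(w_t, xi^k)> into E<w_t - w*, grad F^(k)(w_t)>, whose average over k is at least
   (mu/2) Delta_t by strong convexity of each F^(k) and optimality of w* for F. *)

Section euclidean.
Variables (R : realType) (d : nat).
Implicit Types (a b c : 'rV[R]_d).

Lemma sqnorm_ge0 a : 0 <= sqnorm a.
Proof. by apply: sumr_ge0 => i _; rewrite -expr2 sqr_ge0. Qed.

Lemma sqnorm_subZ a b (e : R) :
  sqnorm (a - e *: b) = sqnorm a - 2 * e * dotv a b + e ^+ 2 * sqnorm b.
Proof.
rewrite /sqnorm /dotv !mulr_sumr -sumrB -big_split /=.
by apply: eq_bigr => i _; rewrite !mxE; ring.
Qed.

Lemma dotv_subC a b c : dotv (b - a) c = - dotv (a - b) c.
Proof. by rewrite /dotv -sumrN; apply: eq_bigr => i _; rewrite !mxE; ring. Qed.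

Lemma sqnorm_subC a b : sqnorm (b - a) = sqnorm (a - b).
Proof. by rewrite /sqnorm /dotv; apply: eq_bigr => i _; rewrite !mxE; ring. Qed.

Lemma abs_dotv_le a b : `|dotv a b| <= (sqnorm a + sqnorm b) / 2.
Proof.
have amgm (x y : R) : `|x * y| <= (x * x + y * y) / 2.
  by apply/ler_normlP; split; [have := sqr_ge0 (x + y) | have := sqr_ge0 (x - y)]; nra.
apply: (le_trans (ler_norm_sum _ _ _)).
by rewrite /sqnorm /dotv -big_split /= mulr_suml; apply: ler_sum => i _.
Qed.

Lemma strongly_convex_mean_dotv_ge (N : nat) (F : 'I_N -> 'rV[R]_d -> R)
    (grad : 'I_N -> 'rV[R]_d -> 'rV[R]_d) (mu : R) c x :
  (0 < N)%N ->
  (forall k v y, F k y + dotv (v - y) (grad k y) + mu / 2 * sqnorm (v - y) <= F k v) ->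
  (forall v, N%:R^-1 * \sum_(k < N) F k c <= N%:R^-1 * \sum_(k < N) F k v) ->
  mu / 2 * sqnorm (x - c) <= N%:R^-1 * \sum_(k < N) dotv (x - c) (grad k x).
Proof.
move=> N0 sconv cmin.
have Npos : 0 < N%:R :> R by rewrite ltr0n.
have hk k : F k x - F k c + mu / 2 * sqnorm (x - c) <= dotv (x - c) (grad k x).
  by have := sconv k c x; rewrite dotv_subC sqnorm_subC; lra.
have Ninv : 0 <= N%:R^-1 :> R by rewrite invr_ge0 ltW.
have : \sum_(k < N) (F k x - F k c + mu / 2 * sqnorm (x - c)) <=
    \sum_(k < N) dotv (x - c) (grad k x) by apply: ler_sum => k _; exact: hk.
move/(ler_wpM2l Ninv).
rewrite big_split sumrB /= sumr_const card_ord -[(_ * _) *+ N]mulr_natl !mulrDr mulrN.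
by rewrite -!mulrA mulKf ?gt_eqF //; have := cmin x; lra.
Qed.


End euclidean.

Lemma sum_indic_select (R : pzRingType) T (N : nat) (s : T -> 'I_N) (F : 'I_N -> R) (x : T) :
  \sum_(k < N) \1_[set y | s y = k] x * F k = F (s x).
Proof.
rewrite (bigD1 (s x)) //= indicE mem_set // mul1r big1 ?addr0 // => k /eqP sxk.
by rewrite indicE memNset ?mul0r //= => /esym.
Qed.

Section vecM_measurability.
Variables (R : realType) (d : nat) (dT : measure_display) (T : measurableType dT).
Implicit Types (f h : T -> 'rV[R]_d).

Lemma measurable_coord (i : 'I_d) :
  measurable_fun [set: vecM R d] (fun v : vecM R d => v ord0 i).
Proof. by move=> _ A mA; rewrite setTI; apply: sub_sigma_algebra; exists i, A. Qed.

Lemma measurable_vecM f :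
  (forall i, measurable_fun [set: T] (fun x => f x ord0 i)) ->
  measurable_fun [set: T] (f : T -> vecM R d).
Proof.
move=> mf; apply: (@measurability _ _ _ (vecM R d) _ _ (@coord_cyl R d)) => //.
move=> _ [S [i [A [mA ->]]] <-].
by have := mf i measurableT A mA; rewrite setTI.
Qed.

Lemma measurable_coordB f c (i : 'I_d) :
  measurable_fun [set: T] (fun x => f x ord0 i) ->
  measurable_fun [set: T] (fun x => (f x - c) ord0 i).
Proof.
move=> mf; under eq_fun do rewrite !mxE.
exact: measurable_funB.
Qed.

Lemma measurable_dotv f h :
  (forall i, measurable_fun [set: T] (fun x => f x ord0 i)) ->
  (forall i, measurable_fun [set: T] (fun x => h x ord0 i)) ->
  measurable_fun [set: T] (fun x => dotv (f x) (h x)).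
Proof. by move=> mf mh; apply: measurable_sum => i; exact: measurable_funM. Qed.

End vecM_measurability.

Lemma measurable_iterates (R : realType) (d N : nat)
    (dO : measure_display) (Om : measurableType dO)
    (dX : measure_display) (Xi : measurableType dX)
    (g : 'I_N -> 'rV[R]_d -> Xi -> 'rV[R]_d)
    (xi : nat -> 'I_N -> Om -> Xi) (s : nat -> Om -> 'I_N)
    (w : nat -> Om -> 'rV[R]_d) (eta : nat -> R) :
  meas_vec (w 0%N) -> (forall k, meas_oracle (g k)) ->
  (forall t k, measurable_fun [set: Om] (xi t k)) ->
  (forall t k, measurable [set om | s t om = k]) ->
  (forall t om, w t.+1 om = w t om - eta t *: g (s t om) (w t om) (xi t (s t om) om)) ->
  forall t, meas_vec (w t).
Proof.
move=> mw0 mg mxi ms hw; elim=> [//|t mwt]; apply: measurable_vecM => i.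
have -> : (fun om => w t.+1 om ord0 i) = (fun om => w t om ord0 i - eta t *
    \sum_(k < N) \1_[set om | s t om = k] om * g k (w t om) (xi t k om) ord0 i).
  by apply/funext => om; rewrite hw !mxE sum_indic_select.
apply: measurable_funB; first exact: (measurableT_comp (@measurable_coord R d i) mwt).
apply: measurable_funM => //; apply: measurable_sum => k.
apply: measurable_funM; first exact: measurable_indic.
exact: (measurableT_comp (mg k i) (measurable_fun_pair mwt (mxi t k))).
Qed.

Definition mpair d d1 d2 (T : measurableType d) (T1 : measurableType d1)
    (T2 : measurableType d2) (X : {mfun T >-> T1}) (Y : {mfun T >-> T2}) :
    {mfun T >-> (T1 * T2)%type} :=
  HB.pack (fun x => (X x, Y x)) (isMeasurableFun.Build _ _ _ _ _
    (measurable_fun_pair (@measurable_funPT _ _ _ _ X) (@measurable_funPT _ _ _ _ Y))).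

Lemma integral_pushforwardT d1 d2 (T1 : measurableType d1) (T2 : measurableType d2)
    (R : realType) (mu : {measure set T1 -> \bar R}) (phi : T1 -> T2)
    (mphi : measurable_fun [set: T1] phi) (f : T2 -> \bar R) :
  measurable_fun [set: T2] f ->
  (\int[pushforward mu phi]_y f y = \int[mu]_x f (phi x))%E.
Proof.
move=> mf; rewrite [LHS]integralE [RHS]integralE.
rewrite (ge0_integral_pushforward mphi mu measurableT); last 2 first.
- exact: measurable_funepos.
- by move=> y _; exact: funepos_ge0.
rewrite (ge0_integral_pushforward mphi mu measurableT); last 2 first.
- exact: measurable_funeneg.
- by move=> y _; exact: funeneg_ge0.
rewrite preimage_setT; congr (_ - _)%E; apply: eq_integral => x _ /=.
- by rewrite !funeposE.
- by rewrite !funenegE.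
Qed.

Section independent_pair.
Local Open Scope ereal_scope.
Context d d1 d2 (T : measurableType d) (T1 : measurableType d1)
  (T2 : measurableType d2) (R : realType).
Variables (m : {measure set T -> \bar R}) (PX : probability T1 R) (PY : probability T2 R).
Variables (X : {mfun T >-> T1}) (Y : {mfun T >-> T2}).
Hypothesis indepXY : forall A B, measurable A -> measurable B ->
  m (X @^-1` A `&` Y @^-1` B) = PX A * PY B.

Let mXY := @measurable_funPT _ _ _ _ (mpair X Y).

Let pushforward_pair_prod (E : set (T1 * T2)) : measurable E ->
  pushforward m (mpair X Y) E = (PX \x PY) E.
Proof.
by move=> mE; apply/esym/(product_measure_unique (m' := pushforward m (mpair X Y))).
Qed.

Lemma ge0_integral_indep (f : T1 * T2 -> \bar R) :
  measurable_fun [set: T1 * T2] f -> (forall z, 0 <= f z) ->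
  \int[m]_x f (X x, Y x) = \int[PX \x PY]_z f z.
Proof.
move=> mf f0; transitivity (\int[pushforward m (mpair X Y)]_z f z).
  by rewrite (ge0_integral_pushforward mXY m measurableT) ?preimage_setT.
by apply: eq_measure_integral => E mE _; exact: pushforward_pair_prod.
Qed.

Lemma integral_indep (f : T1 * T2 -> \bar R) :
  measurable_fun [set: T1 * T2] f -> m.-integrable [set: T] (fun x => f (X x, Y x)) ->
  \int[m]_x f (X x, Y x) = \int[PX]_x \int[PY]_y f (x, y) /\
  PX.-integrable [set: T1] (fun x => \int[PY]_y f (x, y)).
Proof.
move=> mf intf; have intf_prod : (PX \x PY).-integrable [set: T1 * T2] f.
  apply/integrableP; split => //.
  rewrite -(@ge0_integral_indep (abse \o f)); first by case/integrableP : intf.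
  - exact: measurableT_comp.
  - by move=> z /=.
split; last exact: integrable_fubini_F intf_prod.
rewrite (integral12_prod_meas1 intf_prod) -(integral_pushforwardT m mXY mf).
by apply: eq_measure_integral => E mE _; exact: pushforward_pair_prod.
Qed.

End independent_pair.

Section mrestr_integral.
Local Open Scope ereal_scope.
Context d (T : measurableType d) (R : realType).
Variables (m : {measure set T -> \bar R}) (S : set T) (mS : measurable S).

Import HBNNSimple.

Let integral_mrestr_nnsfun (h : {nnsfun T >-> R}) :
  \int[mrestr m mS]_x (h x)%:E = \int[m]_(x in S) (h x)%:E.
Proof.
under [LHS]eq_integral do rewrite fimfunE -fsumEFin//.
rewrite [LHS]ge0_integral_fsum//; last 2 first.
- by move=> r; exact/measurable_EFinP/measurableT_comp.
- by move=> n x _; rewrite EFinM nnfun_muleindic_ge0.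
under [RHS]eq_integral do rewrite fimfunE -fsumEFin//.
rewrite [RHS]ge0_integral_fsum//; last 2 first.
- by move=> r; exact/measurable_EFinP/measurableT_comp/measurable_funTS.
- by move=> n x _; rewrite EFinM nnfun_muleindic_ge0.
apply: eq_fsbigr => r _; rewrite !integralZl_indic_nnsfun//= !integral_indic //.
by rewrite /mrestr setIT.
Qed.

Lemma ge0_integral_mrestr (f : T -> \bar R) : measurable_fun [set: T] f ->
  (forall x, 0 <= f x) -> \int[mrestr m mS]_x f x = \int[m]_(x in S) f x.
Proof.
move=> mf f0; pose f_ := nnsfun_approx measurableT mf.
have mct (mu : {measure set T -> \bar R}) D : measurable D ->
    \int[mu]_(x in D) f x = limn (fun n => \int[mu]_(x in D) (f_ n x)%:E).
  move=> mD; rewrite -monotone_convergence //=.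
  - apply: eq_integral => x _; apply/esym/cvg_lim => //; exact: cvg_nnsfun_approx.
  - by move=> n; exact/measurable_EFinP/measurable_funTS.
  - by move=> n x _; rewrite lee_fin.
  - by move=> x _ a b ab; rewrite lee_fin; exact/lefP/nd_nnsfun_approx.
rewrite (mct _ _ measurableT) (mct _ _ mS); congr (limn _); apply/funext => n.
exact: integral_mrestr_nnsfun.
Qed.
End mrestr_integral.

Section select.
Local Open Scope ereal_scope.
Context d d1 d2 (T : measurableType d) (T1 : measurableType d1)
  (T2 : measurableType d2) (R : realType).
Variables (P : probability T R) (PX : probability T1 R) (PY : probability T2 R).
Variables (X : {mfun T >-> T1}) (Y : {mfun T >-> T2}) (S : set T) (N : nat).
Hypotheses (mS : measurable S) (N0 : (0 < N)%N).
Hypothesis indepXY : forall A B, measurable A -> measurable B ->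
  P (X @^-1` A `&` Y @^-1` B) = PX A * PY B.
Hypothesis indepS : forall A B, measurable A -> measurable B ->
  P (X @^-1` A `&` Y @^-1` B `&` S) = P (X @^-1` A `&` Y @^-1` B) * (N%:R^-1)%:E.

Lemma ge0_integral_select (f : T1 * T2 -> \bar R) :
  measurable_fun [set: T1 * T2] f -> (forall z, 0 <= f z) ->
  \int[P]_(x in S) f (X x, Y x) = (N%:R^-1)%:E * \int[P]_x f (X x, Y x).
Proof.
move=> mf f0; have Npos : (0 < N%:R :> R)%R by rewrite ltr0n.
have mfXY : measurable_fun [set: T] (fun x => f (X x, Y x)).
  exact: measurableT_comp mf (@measurable_funPT _ _ _ _ (mpair X Y)).
(* N times the restriction of P to S is again a law under which X and Y are independent. *)
pose mS' := mscale (NngNum (ler0n R N)) (mrestr P mS).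
have indepXY' A B : measurable A -> measurable B ->
    mS' (X @^-1` A `&` Y @^-1` B) = PX A * PY B.
  move=> mA mB; rewrite /mS' /mscale /= /mrestr indepS // indepXY //.
  by rewrite muleC -muleA -EFinM mulVf ?mule1 // gt_eqF.
rewrite (ge0_integral_indep indepXY) // -(ge0_integral_indep indepXY') //.
rewrite ge0_integral_mscale // ge0_integral_mrestr //.
by rewrite muleA -EFinM mulVf ?mul1e // gt_eqF.
Qed.

Lemma integral_select (f : T1 * T2 -> R) : measurable_fun [set: T1 * T2] f ->
  P.-integrable [set: T] (fun x => (f (X x, Y x))%:E) ->
  \int[P]_x (\1_S x * f (X x, Y x))%:E = (N%:R^-1)%:E * \int[P]_x (f (X x, Y x))%:E.
Proof.
move=> mf intf; have mEf : measurable_fun [set: T1 * T2] (EFin \o f).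
  exact/measurable_EFinP.
have -> : \int[P]_x (\1_S x * f (X x, Y x))%:E = \int[P]_(x in S) (f (X x, Y x))%:E.
  rewrite [RHS]integral_mkcond; apply: eq_integral => x _.
  by rewrite /restrict indicE; case: ifPn; rewrite ?mul1r ?mul0r.
have pos_comp D : \int[P]_(x in D) (fun x => (f (X x, Y x))%:E)^\+ x =
    \int[P]_(x in D) (EFin \o f)^\+ (X x, Y x).
  by apply: eq_integral => x _; rewrite !funeposE.
have neg_comp D : \int[P]_(x in D) (fun x => (f (X x, Y x))%:E)^\- x =
    \int[P]_(x in D) (EFin \o f)^\- (X x, Y x).
  by apply: eq_integral => x _; rewrite !funenegE.
have := integrable_neg_fin_num measurableT intf; rewrite neg_comp -fin_numN => fin_neg.
rewrite integralE [in RHS]integralE !pos_comp !neg_comp.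
rewrite !ge0_integral_select //; last 2 first.
- exact: measurable_funeneg.
- exact: measurable_funepos.
by rewrite [in RHS]muleBr //; exact: fin_num_adde_defl.
Qed.
End select.

Lemma expectation_dotv (R : realType) (d : nat) dO (Om : measurableType dO)
    (mu : {measure set Om -> \bar R}) (a v : 'rV[R]_d) (V : Om -> 'rV[R]_d) :
  (forall i, mu.-integrable [set: Om] (fun om => (V om ord0 i)%:E) /\
    (\int[mu]_om (V om ord0 i)%:E = (v ord0 i)%:E)%E) ->
  (\int[mu]_om (dotv a (V om))%:E = (dotv a v)%:E)%E.
Proof.
move=> hV; under eq_integral do rewrite -sumEFin.
rewrite integral_sum //; last first.
  by move=> i; under eq_fun do rewrite EFinM; exact/integrableZl/(hV i).1.
rewrite -sumEFin; apply: eq_bigr => i _; under eq_integral do rewrite EFinM.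
by rewrite integralZl ?(hV i).1 // (hV i).2.
Qed.

Section oracle_expectation.
Local Open Scope ereal_scope.
Context (R : realType) (d : nat) dX (Xi : measurableType dX) dO (Om : measurableType dO).
Variables (P : probability Om R) (g : 'rV[R]_d -> Xi -> 'rV[R]_d)
  (grad : 'rV[R]_d -> 'rV[R]_d) (c : 'rV[R]_d).
Variables (X : {mfun Om >-> vecM R d}) (Y : {mfun Om >-> Xi}).
Hypothesis mg : meas_oracle g.
Hypothesis indepXY : forall A B, measurable A -> measurable B ->
  P (X @^-1` A `&` Y @^-1` B) = distribution P X A * distribution P Y B.
Hypothesis unbiased : forall x i,
  P.-integrable [set: Om] (fun om => (g x (Y om) ord0 i)%:E) /\
  \int[P]_om (g x (Y om) ord0 i)%:E = (grad x ord0 i)%:E.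
Hypothesis int_dotv_oracle :
  P.-integrable [set: Om] (fun om => (dotv (X om - c) (g (X om) (Y om)))%:E).

Lemma expectation_dotv_oracle :
  \int[P]_om (dotv (X om - c) (g (X om) (Y om)))%:E =
    \int[P]_om (dotv (X om - c) (grad (X om)))%:E /\
  P.-integrable [set: Om] (fun om => (dotv (X om - c) (grad (X om)))%:E).
Proof.
pose f (z : vecM R d * Xi) := (dotv (z.1 - c) (g z.1 z.2))%:E.
have mf : measurable_fun [set: vecM R d * Xi] f.
  apply/measurable_EFinP/measurable_dotv => i; last exact: mg.
  apply: measurable_coordB; exact: (measurableT_comp (@measurable_coord R d i) measurable_fst).
have inner x : \int[distribution P Y]_y f (x, y) = (dotv (x - c) (grad x))%:E.
  rewrite /distribution (integral_pushforwardT P (@measurable_funPT _ _ _ _ Y)) /=.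
    by rewrite /f /=; apply: expectation_dotv => i; exact: unbiased.
  exact: measurable_fun_pair2 x mf.
have [-> intF] := integral_indep indepXY mf int_dotv_oracle.
have {}intF : (distribution P X).-integrable [set: vecM R d]
    (fun x => (dotv (x - c) (grad x))%:E).
  by apply: eq_integrable intF => // x _; exact: inner.
have mF := measurable_int _ intF.
split.
  rewrite -(integral_pushforwardT P (@measurable_funPT _ _ _ _ X) mF).
  by apply: eq_integral => x _; exact: inner.
apply/integrableP; split; first exact: measurableT_comp mF (@measurable_funPT _ _ _ _ X).
case/integrableP : intF => _; rewrite /distribution.
rewrite (integral_pushforwardT P (@measurable_funPT _ _ _ _ X)) //.
exact: measurableT_comp mF.
Qed.

End oracle_expectation.

Section sgd_step.
Local Open Scope ereal_scope.
Context (R : realType) (d N : nat) dO (Om : measurableType dO) dX (Xi : measurableType dX).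
Variables (P : probability Om R) (g : 'I_N -> 'rV[R]_d -> Xi -> 'rV[R]_d)
  (grad : 'I_N -> 'rV[R]_d -> 'rV[R]_d) (c : 'rV[R]_d) (eta : R).
Variables (X : {mfun Om >-> vecM R d}) (Y : 'I_N -> {mfun Om >-> Xi}) (s : Om -> 'I_N).
Hypotheses (N0 : (0 < N)%N) (mg : forall k, meas_oracle (g k)).
Hypothesis indep : indep_iterate_samples P X (fun k => Y k).
Hypothesis unif : uniform_indep_index P X (fun k => Y k) s.
Hypothesis unbiased : forall k x i,
  P.-integrable [set: Om] (fun om => (g k x (Y k om) ord0 i)%:E) /\
  \int[P]_om (g k x (Y k om) ord0 i)%:E = (grad k x ord0 i)%:E.
Hypothesis fin_dist : \int[P]_om (sqnorm (X om - c))%:E < +oo.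
Hypothesis fin_oracle : forall k, \int[P]_om (sqnorm (g k (X om) (Y k om)))%:E < +oo.

Let preimage_pair k A B : X @^-1` A `&` Y k @^-1` B =
  X @^-1` A `&` \bigcap_(j in [set: 'I_N]) (Y j @^-1` (if j == k then B else setT)).
Proof.
apply/seteqP; split => om /= [XA YB]; split => //.
  by move=> j _; case: ifP => // /eqP ->.
by have := YB k I; rewrite eqxx.
Qed.

Let indep_pair k A B : measurable A -> measurable B ->
  P (X @^-1` A `&` Y k @^-1` B) = distribution P X A * distribution P (Y k) B.
Proof.
move=> mA mB; rewrite preimage_pair indep //; last by move=> j; case: ifP.
congr (_ * _); rewrite (bigD1 k) //= eqxx big1 ?mule1 // => j /negbTE ->.
by rewrite preimage_setT probability_setT.
Qed.

Let select_pair k A B : measurable A -> measurable B ->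
  P (X @^-1` A `&` Y k @^-1` B `&` [set om | s om = k]) =
  P (X @^-1` A `&` Y k @^-1` B) * (N%:R^-1)%:E.
Proof.
by move=> mA mB; rewrite !preimage_pair unif.2 // => j; case: ifP.
Qed.

Let mX : measurable_fun [set: Om] (X : Om -> vecM R d) := @measurable_funPT _ _ _ _ X.

Let mXc i : measurable_fun [set: Om] (fun om => ((X om - c) ord0 i)%R).
Proof. apply: measurable_coordB; exact: (measurableT_comp (@measurable_coord R d i) mX). Qed.

Let moracle k i : measurable_fun [set: Om] (fun om => g k (X om) (Y k om) ord0 i).
Proof.
exact: measurableT_comp (mg k i) (measurable_fun_pair mX (@measurable_funPT _ _ _ _ (Y k))).
Qed.

Let integrable_sqnorm (f : Om -> 'rV[R]_d) :
  (forall i, measurable_fun [set: Om] (fun om => f om ord0 i)) ->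
  \int[P]_om (sqnorm (f om))%:E < +oo ->
  P.-integrable [set: Om] (fun om => (sqnorm (f om))%:E).
Proof.
move=> mf fin; apply/integrableP; split; first exact/measurable_EFinP/measurable_dotv.
under eq_integral do rewrite abse_EFin ger0_norm ?sqnorm_ge0 //.
exact: fin.
Qed.

Let int_dist := integrable_sqnorm mXc fin_dist.
Let int_oracle k := integrable_sqnorm (moracle k) (fin_oracle k).

Let int_dotv_oracle k :
  P.-integrable [set: Om] (fun om => (dotv (X om - c) (g k (X om) (Y k om)))%:E).
Proof.
apply: (le_integrable measurableT (g := fun om => (2^-1)%:E * ((sqnorm (X om - c))%:E +
    (sqnorm (g k (X om) (Y k om)))%:E))).
- exact/measurable_EFinP/measurable_dotv.
- move=> om _; rewrite -EFinD -EFinM !abse_EFin lee_fin mulrC.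
  rewrite (le_trans (abs_dotv_le _ _)) // ger0_norm ?divr_ge0 ?addr_ge0 ?sqnorm_ge0 //.
- exact/integrableZl/integrableD.
Qed.

Let oracle_grad k :=
  expectation_dotv_oracle (mg k) (indep_pair k) (unbiased k) (int_dotv_oracle k).

Lemma integrable_dotv_grad k :
  P.-integrable [set: Om] (fun om => (dotv (X om - c) (grad k (X om)))%:E).
Proof. exact: (oracle_grad k).2. Qed.

Lemma expectation_sgd_step :
  \int[P]_om (sqnorm (X om - eta *: g (s om) (X om) (Y (s om) om) - c))%:E =
  (fine (\int[P]_om (sqnorm (X om - c))%:E) +
   \sum_(k < N) N%:R^-1 * (eta ^+ 2 * fine (\int[P]_om (sqnorm (g k (X om) (Y k om)))%:E)
     - 2 * eta * fine (\int[P]_om (dotv (X om - c) (grad k (X om)))%:E)))%:E.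
Proof.
pose phi k (z : vecM R d * Xi) :=
  (eta ^+ 2 * sqnorm (g k z.1 z.2) - 2 * eta * dotv (z.1 - c) (g k z.1 z.2))%R.
have mphi k : measurable_fun [set: vecM R d * Xi] (phi k).
  have mfst i : measurable_fun [set: vecM R d * Xi] (fun z => ((z.1 - c) ord0 i)%R).
    by apply: measurable_coordB; exact: measurableT_comp (@measurable_coord R d i) measurable_fst.
  by apply: measurable_funB; apply: measurable_funM => //; apply: measurable_dotv => // i;
    exact: mg.
have int_phi k : P.-integrable [set: Om] (fun om => (phi k (X om, Y k om))%:E).
  rewrite /phi; under eq_fun do rewrite EFinB !EFinM.
  by apply: integrableB => //; apply: integrableZl.
have exp_phi k : \int[P]_om (phi k (X om, Y k om))%:E =
    (eta ^+ 2 * fine (\int[P]_om (sqnorm (g k (X om) (Y k om)))%:E)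
     - 2 * eta * fine (\int[P]_om (dotv (X om - c) (grad k (X om)))%:E))%:E.
  rewrite /phi; under eq_integral do rewrite EFinB !EFinM.
  rewrite integralB //; try by apply: integrableZl.
  rewrite !integralZl // (oracle_grad k).1 EFinB !EFinM !fineK //.
    exact: integrable_fin_num (integrable_dotv_grad k).
  exact: integrable_fin_num (int_oracle k).
have int_sel k : P.-integrable [set: Om]
    (fun om => (\1_[set om | s om = k] om * phi k (X om, Y k om))%:E).
  apply: le_integrable (int_phi k) => //.
  - apply/measurable_EFinP/measurable_funM; first exact/measurable_indic/(unif.1 k).
    exact: measurableT_comp (mphi k) (@measurable_funPT _ _ _ _ (mpair X (Y k))).
  - move=> om _; rewrite !abse_EFin lee_fin normrM indicE.
    by case: (om \in _); rewrite ?normr1 ?normr0 ?mul1r ?mul0r.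
have decomp om : (sqnorm (X om - eta *: g (s om) (X om) (Y (s om) om) - c))%:E =
    (sqnorm (X om - c))%:E +
    \sum_(k < N) (\1_[set om | s om = k] om * phi k (X om, Y k om))%:E.
  rewrite sumEFin -EFinD (sum_indic_select s (fun k => phi k (X om, Y k om))).
  by rewrite addrAC sqnorm_subZ /phi /=; congr EFin; ring.
under eq_integral do rewrite decomp.
rewrite integralD //; last exact: integrable_sum.
rewrite integral_sum //.
under eq_bigr => k _ do rewrite (integral_select (unif.1 k) N0 (indep_pair k) (select_pair k)
  (mphi k) (int_phi k)) exp_phi -EFinM.
by rewrite sumEFin -[in LHS](fineK (integrable_fin_num _ int_dist)) // EFinD.
Qed.

Lemma mean_expectation_dotv_grad_ge (mu : R) :
  (forall x, mu / 2 * sqnorm (x - c) <= N%:R^-1 * \sum_(k < N) dotv (x - c) (grad k x))%R ->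
  (mu / 2 * fine (\int[P]_om (sqnorm (X om - c))%:E) <=
   N%:R^-1 * \sum_(k < N) fine (\int[P]_om (dotv (X om - c) (grad k (X om)))%:E))%R.
Proof.
move=> hx; rewrite -lee_fin.
have int_grad : P.-integrable [set: Om]
    (fun om => \sum_(k < N) (dotv (X om - c) (grad k (X om)))%:E).
  by apply: (integrable_sum measurableT) => k _; exact: integrable_dotv_grad.
have int_mean : P.-integrable [set: Om]
    (fun om => (N%:R^-1 * \sum_(k < N) dotv (X om - c) (grad k (X om)))%:E).
  by under eq_fun do rewrite EFinM -sumEFin; exact: integrableZl.
have int_dist' : P.-integrable [set: Om] (fun om => (mu / 2 * sqnorm (X om - c))%:E).
  by under eq_fun do rewrite EFinM; exact: integrableZl.
have := le_integral measurableT int_dist' int_mean (fun om _ => hx (X om)).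
under eq_integral do rewrite EFinM.
under [X in _ <= X -> _]eq_integral do rewrite EFinM -sumEFin.
rewrite !integralZl // integral_sum // => [|k]; last exact: integrable_dotv_grad.
rewrite !EFinM -sumEFin fineK ?(integrable_fin_num _ int_dist) //.
suff -> : \sum_(k < N) (fine (\int[P]_om (dotv (X om - c) (grad k (X om)))%:E))%:E =
    \sum_(k < N) \int[P]_om (dotv (X om - c) (grad k (X om)))%:E by [].
apply: eq_bigr => k _.
by rewrite fineK // (integrable_fin_num _ (integrable_dotv_grad k)).
Qed.

End sgd_step.

Lemma sgd_recursion_le (R : realFieldType) (N : nat) (U mu eta G2 B : R)
    (Q E : 'I_N -> R) :
  (0 < N)%N -> 0 < eta -> (forall k, Q k <= G2) -> G2 <= B ->
  mu / 2 * U <= N%:R^-1 * \sum_(k < N) E k ->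
  U + \sum_(k < N) N%:R^-1 * (eta ^+ 2 * Q k - 2 * eta * E k) <=
    (1 - mu * eta) * U + eta ^+ 2 * B.
Proof.
move=> N0 eta0 QG GB mean_E; have Npos : 0 < N%:R :> R by rewrite ltr0n.
have mean_Q : N%:R^-1 * \sum_(k < N) Q k <= G2.
  have : \sum_(k < N) Q k <= \sum_(k < N) G2 by apply: ler_sum => k _.
  rewrite sumr_const card_ord => sumQ.
  by rewrite -(ler_pM2l Npos) mulrA mulfV ?gt_eqF // mul1r mulr_natl.
have -> : \sum_(k < N) N%:R^-1 * (eta ^+ 2 * Q k - 2 * eta * E k) =
    eta ^+ 2 * (N%:R^-1 * \sum_(k < N) Q k) - 2 * eta * (N%:R^-1 * \sum_(k < N) E k).
  by rewrite -mulr_sumr sumrB -!mulr_sumr; ring.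
have : eta ^+ 2 * (N%:R^-1 * \sum_(k < N) Q k) <= eta ^+ 2 * B.
  by rewrite ler_wpM2l ?sqr_ge0 // (le_trans mean_Q).
have : 2 * eta * (mu / 2 * U) <= 2 * eta * (N%:R^-1 * \sum_(k < N) E k).
  by rewrite ler_wpM2l // mulr_ge0 // ltW.
lra.
Qed.

Theorem mainTheorem4
  (R : realType) (d N : nat)
  (Fk : 'I_N -> 'rV[R]_d -> R) (gradF : 'I_N -> 'rV[R]_d -> 'rV[R]_d)
  (L mu G : R) (sigma : 'I_N -> R)
  (wstar : 'rV[R]_d) (Fkstar : 'I_N -> R)
  (dO : measure_display) (Om : measurableType dO) (P : probability Om R)
  (dX : measure_display) (Xi : measurableType dX)
  (g : 'I_N -> 'rV[R]_d -> Xi -> 'rV[R]_d)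
  (xi : nat -> 'I_N -> Om -> Xi) (s : nat -> Om -> 'I_N)
  (w : nat -> Om -> 'rV[R]_d) (eta : nat -> R) :
  (0 < N)%N ->
  0 < mu -> 0 < L ->
  (forall k x v, is_derive x v (Fk k) (dotv (gradF k x) v)) ->
  (forall k v x, Fk k v <= Fk k x + dotv (v - x) (gradF k x) + L / 2 * sqnorm (v - x)) ->
  (forall k v x, Fk k v >= Fk k x + dotv (v - x) (gradF k x) + mu / 2 * sqnorm (v - x)) ->
  (forall v, (N%:R)^-1 * \sum_(k < N) Fk k wstar <= (N%:R)^-1 * \sum_(k < N) Fk k v) ->
  (forall k, (forall v, Fkstar k <= Fk k v) /\ exists v, Fk k v = Fkstar k) ->
  meas_vec (w 0%N) ->
  (forall k, meas_oracle (g k)) ->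
  (forall t k, measurable_fun [set: Om] (xi t k)) ->
  (forall t, indep_iterate_samples P (w t) (xi t)) ->
  (forall t, uniform_indep_index P (w t) (xi t) (s t)) ->
  (forall t k x (i : 'I_d),
      P.-integrable [set: Om] (fun om => ((g k x (xi t k om)) ord0 i)%:E) /\
      (\int[P]_om ((g k x (xi t k om)) ord0 i)%:E = ((gradF k x) ord0 i)%:E)%E) ->
  (forall t k, (\int[P]_om (sqnorm (g k (w t om) (xi t k om) - gradF k (w t om)))%:E
                 <= (sigma k ^+ 2)%:E)%E) ->
  (forall t k, (\int[P]_om (sqnorm (g k (w t om) (xi t k om)))%:E <= (G ^+ 2)%:E)%E) ->
  (forall t, 0 < eta t) ->
  (forall t, eta t <= L^-1) ->
  (forall t, eta t.+1 <= eta t) ->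
  (forall t, eta t <= 2 * eta t.+1) ->
  (forall t om, w t.+1 om = w t om - eta t *: g (s t om) (w t om) (xi t (s t om) om)) ->
  let Gamma := (N%:R)^-1 * \sum_(k < N) Fk k wstar - (N%:R)^-1 * \sum_(k < N) Fkstar k in
  let B := (N%:R ^+ 2)^-1 * \sum_(k < N) sigma k ^+ 2 + 2 * L * Gamma + G ^+ 2 in
  let Delta := fun t => (\int[P]_om (sqnorm (w t om - wstar))%:E)%E in
  forall t, (Delta t < +oo)%E ->
    (Delta t.+1 <= (1 - mu * eta t)%:E * Delta t + (eta t ^+ 2 * B)%:E)%E.
Proof.
move=> N0 _ L0 _ _ sconv wmin Fstar mw0 mg mxi hind hsel unb _ hG eta0 _ _ _ hw.
move=> Gamma B Delta t fin_dist.
have mw := measurable_iterates mw0 mg mxi (fun t => (hsel t).1) hw.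
pose X : {mfun Om >-> vecM R d} :=
  HB.pack (w t : Om -> vecM R d) (isMeasurableFun.Build _ _ _ _ _ (mw t)).
pose Y k : {mfun Om >-> Xi} := HB.pack (xi t k) (isMeasurableFun.Build _ _ _ _ _ (mxi t k)).
have fin_oracle k : (\int[P]_om (sqnorm (g k (X om) (Y k om)))%:E < +oo)%E.
  exact: le_lt_trans (hG t k) (ltry _).
have step := @expectation_sgd_step _ _ _ _ _ _ _ P g gradF wstar (eta t) X Y (s t)
  N0 mg (hind t) (hsel t) (unb t) fin_dist fin_oracle.
have mean_E := @mean_expectation_dotv_grad_ge _ _ _ _ _ _ _ P g gradF wstar X Y
  mg (hind t) (unb t) fin_dist fin_oracle mu
  (fun x => strongly_convex_mean_dotv_ge x N0 sconv wmin).
have GB : G ^+ 2 <= B.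
  have Gamma_ge0 : 0 <= Gamma.
    rewrite subr_ge0 ler_wpM2l ?invr_ge0 // ler_sum // => k _.
    exact: (Fstar k).1.
  have : 0 <= (N%:R ^+ 2)^-1 * \sum_(k < N) sigma k ^+ 2.
    by rewrite mulr_ge0 ?invr_ge0 ?sumr_ge0 // => k _; rewrite sqr_ge0.
  have : 0 <= 2 * L * Gamma by rewrite !mulr_ge0 // ltW.
  rewrite /B; lra.
rewrite /Delta; under eq_integral do rewrite hw.
have fin_Dt : (\int[P]_om (sqnorm (w t om - wstar))%:E)%E \is a fin_num.
  by rewrite ge0_fin_numE // integral_ge0 // => om _; rewrite lee_fin sqnorm_ge0.
rewrite step -[X in (_ <= _ * X + _)%E](fineK fin_Dt) -EFinM -EFinD lee_fin.
apply: (sgd_recursion_le N0 (eta0 t) _ GB mean_E) => k.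
rewrite -lee_fin fineK ?hG // ge0_fin_numE ?fin_oracle //.
by apply: integral_ge0 => om _; rewrite lee_fin sqnorm_ge0.
Qed.
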